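(* Suppose every constraint function of the DCOP takes values in $\{0,1\}$, i.e. $f_{ij}:D_i\times D_j\to\{0,1\}$ for all constraints. Then for any evaporation rate $\gamma$, the DGLS variants $(A,\gamma,cel)$ and $(M,\gamma,cel)$ described in the context are equivalent: when run from the same initial assignment with the same random choices, in every round $k$ and for all agents $i$, neighbors $j$ and values $d_i\in D_i,d_j\in D_j$, the additive and multiplicative effective costs coincide, $\mathrm{EffCost}^{(k)}_A(d_i,j,d_j)=\mathrm{EffCost}^{(k)}_M(d_i,j,d_j)$ (so the two variants make identical decisions).
   Context: A (binary) Distributed Constraint Optimization Problem (DCOP) consists of agents $1,\dots,n$, each controlling one variable $x_i$ with finite domain $D_i$, and binary constraint functions $f_{ij}:D_i\times D_j\to\mathbb{R}_{\ge0}$ with $f_{ji}=f_{ij}^T$; $\mathcal{N}_i$ is the set of neighbors of $i$. Write $\check f_{ij}=\min f_{ij}$, $\hat f_{ij}=\max f_{ij}$. DGLS is parameterized by a tuple (manner, $\gamma$, scope): manner additive $A$ or multiplicative $M$, evaporation rate $\gamma$, scope among $cel$, $tab$, $row$, $col$; only $cel$ is needed here. Each agent $i$ keeps, for each $j\in\mathcal{N}_i$, a cost modifier $M_{ij}$ (a $|D_i|\times|D_j|$ real matrix), initialized to $0$. The effective cost is $\mathrm{EffCost}_A(d_i,j,d_j)=f_{ij}(d_i,d_j)+M_{ij}(d_i,d_j)$ (additive) or $\mathrm{EffCost}_M(d_i,j,d_j)=f_{ij}(d_i,d_j)\cdot[1+M_{ij}(d_i,d_j)]$ (multiplicative). Initially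 each agent picks a random value $d_i\in D_i$ and sends it to its neighbors. Rounds are synchronous; in each round agent $i$: (1) sets $\bar P_i=\emptyset$ and receives the neighbors' current values $d_j$; (2) computes $d_i^*\in\arg\min_{d\in D_i}\sum_{j\in\mathcal{N}_i}\mathrm{EffCost}(d,j,d_j)$ and gain $\Delta_i=\sum_{j}[\mathrm{EffCost}(d_i,j,d_j)-\mathrm{EffCost}(d_i^*,j,d_j)]$, and exchanges gains with neighbors; (3) if $\Delta_i>0$ and $\Delta_i$ is the best improvement among itself and its neighbors, it sets $d_i\gets d_i^*$; otherwise, if no neighbor can improve (all neighbors' gains are $\le 0$), then for each $j\in\mathcal{N}_i$ it declares $f_{ij}$ violated with probability $\eta=\frac{f_{ij}(d_i,d_j)-\check f_{ij}}{\hat f_{ij}-\check f_{ij}}$, and for each violated one adds $j$ to $\bar P_i$ and sends a SYNC message to $j$; (4) lets $\tilde P_i$ be the set of neighbors from which it received SYNC this round; (5) for each $j\in\mathcal{N}_i$: first evaporates, $M_{ij}\gets\gamma M_{ij}$ entrywise, then (scope $cel$) if $j\in\bar P_i\cup\tilde P_i$, sets $M_{ij}(d_i,d_j)\gets M_{ij}(d_i,d_j)+1$ at the current values $d_i,d_j$; (6) sends its value $d_i$ to its neighbors. *)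

(* Synchronous simulation of DGLS with scope cel. *)
From HB Require Import structures.
From mathcomp Require Import all_boot all_order all_algebra.

Import Order.TTheory GRing.Theory Num.Theory.
Local Open Scope ring_scope.

Inductive manner := ManAdd | ManMul.

Definition effcost {R : pzRingType} (m : manner) (fv mv : R) : R :=
  match m with
  | ManAdd => fv + mv
  | ManMul => fv * (1 + mv)
  end.

Section DGLS.
Variable R : realFieldType.
Variable n : nat.
Variable D : 'I_n -> finType.
Variable adj : rel 'I_n.
Variable f : forall i j : 'I_n, D i -> D j -> R.
Variable gamma : R.
(* argmin selection rule of each agent (arbitrary tie-breaking) *)
Variable sel : forall i : 'I_n, (D i -> R) -> D i.
(* random numbers: u k i j in [0,1); agent i declares f_ij violated in
   round k iff u k i j < eta (which happens with probability eta) *)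
Variable u : nat -> 'I_n -> 'I_n -> R.
Variable x0 : forall i : 'I_n, D i.

Record state := State {
  vals : forall i : 'I_n, D i;
  mods : forall i j : 'I_n, D i -> D j -> R }.

Definition init_state : state := State x0 (fun i j _ _ => 0).

Section Round.
Variable m : manner.
Variable k : nat.
Variable s : state.

Definition local_cost (i : 'I_n) (d : D i) : R :=
  \sum_(j | adj i j) effcost m (f i j d (vals s j)) (mods s i j d (vals s j)).

Definition best (i : 'I_n) : D i := sel i (local_cost i).

Definition gain (i : 'I_n) : R :=
  local_cost i (vals s i) - local_cost i (best i).

Definition moves (i : 'I_n) : bool :=
  (0 < gain i) &&
  [forall j, adj i j ==> (gain j < gain i) || ((gain j == gain i) && (i < j)%N)].

Definition no_neighbor_improves (i : 'I_n) : bool :=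
  [forall j, adj i j ==> (gain j <= 0)].

Definition fmin (i j : 'I_n) : R :=
  \big[Num.min / f i j (vals s i) (vals s j)]_(a : D i)
    \big[Num.min / f i j (vals s i) (vals s j)]_(b : D j) f i j a b.
Definition fmax (i j : 'I_n) : R :=
  \big[Num.max / f i j (vals s i) (vals s j)]_(a : D i)
    \big[Num.max / f i j (vals s i) (vals s j)]_(b : D j) f i j a b.

(* violation probability eta; convention eta = 0 if f_ij is constant *)
Definition eta (i j : 'I_n) : R :=
  if fmax i j == fmin i j then 0
  else (f i j (vals s i) (vals s j) - fmin i j) / (fmax i j - fmin i j).

(* j \in Pbar_i : agent i declares f_ij violated (and sends SYNC to j) *)
Definition violated (i j : 'I_n) : bool :=
  [&& adj i j, ~~ moves i, no_neighbor_improves i & u k i j < eta i j].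

Definition step : state :=
  State (fun i => if moves i then best i else vals s i)
        (fun i j a b =>
           gamma * mods s i j a b +
           (if (violated i j || violated j i)
               && (a == vals s i) && (b == vals s j) then 1 else 0)).
End Round.

(* state at the beginning of round k (k = 0: initial state) *)
Fixpoint run (m : manner) (k : nat) : state :=
  match k with
  | 0 => init_state
  | k'.+1 => step m k' (run m k')
  end.

End DGLS.

Arguments vals {R n D} _ _.
Arguments mods {R n D} _ _ _ _ _.
Arguments run {R n D} adj f gamma sel u x0 m k.

(* With constraint values in {0,1}, both manners make the effective cost obey
   the same recurrence under one round: EffCost' = gamma EffCost + (1 - gamma) f + inc,
   where inc is the SYNC increment.  For the multiplicative manner this needs
   f * inc = inc, i.e. no increment lands on a cell with f = 0; that holds
   because a constraint whose current value is its minimum has violation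
   probability 0.  Equal effective costs in turn give equal local costs and
   hence identical decisions, so by induction the two runs never diverge. *)
From Pilot Require Import Defs.
From HB Require Import structures.
From mathcomp Require Import all_boot all_order all_algebra.
From mathcomp Require Import ring.
From Stdlib Require Import FunctionalExtensionality.
Import Order.TTheory GRing.Theory Num.Theory.
Local Open Scope ring_scope.

Lemma effcost_evaporate (R : comPzRingType) (m : manner) (gamma fv mv inc : R) :
  fv * inc = inc ->
  effcost m fv (gamma * mv + inc) = gamma * effcost m fv mv + (1 - gamma) * fv + inc.
Proof. by case: m => /= fvinc; [ring | rewrite -[in RHS]fvinc; ring]. Qed.

Section Round.
Context {R : realFieldType} {n : nat} {D : 'I_n -> finType} {adj : rel 'I_n}.
Context {f : forall i j : 'I_n, D i -> D j -> R} {gamma : R}.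
Context {sel : forall i : 'I_n, (D i -> R) -> D i} {u : nat -> 'I_n -> 'I_n -> R}.
Context {k : nat}.

Section AtMinimum.
Context {s : state R n D} {i j : 'I_n}.
Hypothesis cur_min : forall a b, f i j (vals s i) (vals s j) <= f i j a b.

Lemma fmin_at_minimum : fmin _ _ _ f s i j = f i j (vals s i) (vals s j).
Proof.
by apply: bigmin_eq_id => a _; rewrite bigmin_eq_id // => b _; apply: cur_min.
Qed.

Lemma eta_at_minimum : Defs.eta _ _ _ f s i j = 0.
Proof. by rewrite /Defs.eta fmin_at_minimum subrr mul0r if_same. Qed.

Lemma not_violated_at_minimum m :
  0 <= u k i j -> ~~ violated _ _ _ adj f sel u m k s i j.
Proof. by rewrite /violated eta_at_minimum ltNge => ->; rewrite !andbF. Qed.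

End AtMinimum.

Section Congruence.
Context {m1 m2 : manner} {s1 s2 : state R n D}.
Hypothesis vals_eq : forall i, vals s1 i = vals s2 i.
Hypothesis effcost_eq : forall i j a b, adj i j ->
  effcost m1 (f i j a b) (mods s1 i j a b) = effcost m2 (f i j a b) (mods s2 i j a b).

Lemma local_cost_congr i :
  local_cost _ _ _ adj f m1 s1 i = local_cost _ _ _ adj f m2 s2 i.
Proof.
apply: functional_extensionality => d.
by apply: eq_bigr => j adj_ij; rewrite vals_eq effcost_eq.
Qed.

Lemma best_congr i : best _ _ _ adj f sel m1 s1 i = best _ _ _ adj f sel m2 s2 i.
Proof. by rewrite /best local_cost_congr. Qed.

Lemma gain_congr i : gain _ _ _ adj f sel m1 s1 i = gain _ _ _ adj f sel m2 s2 i.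
Proof. by rewrite /gain local_cost_congr best_congr vals_eq. Qed.

Lemma moves_congr i : moves _ _ _ adj f sel m1 s1 i = moves _ _ _ adj f sel m2 s2 i.
Proof.
rewrite /moves gain_congr; congr (_ && _).
by apply: eq_forallb => j; rewrite !gain_congr.
Qed.

Lemma no_neighbor_improves_congr i :
  no_neighbor_improves _ _ _ adj f sel m1 s1 i
  = no_neighbor_improves _ _ _ adj f sel m2 s2 i.
Proof. by apply: eq_forallb => j; rewrite gain_congr. Qed.

Lemma eta_congr i j : Defs.eta _ _ _ f s1 i j = Defs.eta _ _ _ f s2 i j.
Proof. by rewrite /Defs.eta /fmin /fmax !vals_eq. Qed.

Lemma violated_congr i j :
  violated _ _ _ adj f sel u m1 k s1 i j = violated _ _ _ adj f sel u m2 k s2 i j.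
Proof. by rewrite /violated moves_congr no_neighbor_improves_congr eta_congr. Qed.

Lemma step_vals_congr i :
  vals (step _ _ _ adj f gamma sel u m1 k s1) i
  = vals (step _ _ _ adj f gamma sel u m2 k s2) i.
Proof. by rewrite /= moves_congr best_congr vals_eq. Qed.

End Congruence.

Section ZeroOne.
Hypothesis adj_sym : forall i j, adj i j = adj j i.
Hypothesis f_transpose : forall i j a b, adj i j -> f j i b a = f i j a b.
Hypothesis f_01 : forall i j a b, adj i j -> f i j a b = 0 \/ f i j a b = 1.
Hypothesis u_ge0 : forall i j, 0 <= u k i j.

Lemma violated_current_eq1 m s i j :
  adj i j -> violated _ _ _ adj f sel u m k s i j ->
  f i j (vals s i) (vals s j) = 1.
Proof.
move=> adj_ij viol; have [f0|//] := f_01 _ _ (vals s i) (vals s j) adj_ij.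
have cur_min a b : f i j (vals s i) (vals s j) <= f i j a b.
  by rewrite f0; case: (f_01 _ _ a b adj_ij) => ->.
by move: viol; rewrite (negbTE (not_violated_at_minimum cur_min m (u_ge0 i j))).
Qed.

Lemma step_effcost m s i j a b : adj i j ->
  effcost m (f i j a b) (mods (step _ _ _ adj f gamma sel u m k s) i j a b)
  = gamma * effcost m (f i j a b) (mods s i j a b) + (1 - gamma) * f i j a b
    + (if (violated _ _ _ adj f sel u m k s i j
           || violated _ _ _ adj f sel u m k s j i)
          && (a == vals s i) && (b == vals s j) then 1 else 0).
Proof.
move=> adj_ij; apply: effcost_evaporate.
case: ifP => [/andP[/andP[viol /eqP->] /eqP->]|_]; last by rewrite mulr0.
rewrite mulr1; case/orP: viol => [|viol]; first exact: violated_current_eq1.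
rewrite -f_transpose //; apply: violated_current_eq1 viol.
by rewrite adj_sym.
Qed.

End ZeroOne.
End Round.

Theorem theorem3 (R : realFieldType) (n : nat) (D : 'I_n -> finType)
  (adj : rel 'I_n)
  (adj_sym : forall i j, adj i j = adj j i)
  (adj_irr : forall i, ~~ adj i i)
  (f : forall i j : 'I_n, D i -> D j -> R)
  (f_transpose : forall i j (a : D i) (b : D j), adj i j -> f j i b a = f i j a b)
  (f_01 : forall i j (a : D i) (b : D j), adj i j -> f i j a b = 0 \/ f i j a b = 1)
  (gamma : R)
  (sel : forall i : 'I_n, (D i -> R) -> D i)
  (sel_argmin : forall i (c : D i -> R) (d : D i), c (sel i c) <= c d)
  (u : nat -> 'I_n -> 'I_n -> R)
  (u_range : forall k i j, 0 <= u k i j < 1)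
  (x0 : forall i : 'I_n, D i) :
  forall k : nat,
    (forall i j (a : D i) (b : D j), adj i j ->
       effcost ManAdd (f i j a b) (mods (run adj f gamma sel u x0 ManAdd k) i j a b)
       = effcost ManMul (f i j a b)
           (mods (run adj f gamma sel u x0 ManMul k) i j a b))
    /\ (forall i, vals (run adj f gamma sel u x0 ManAdd k) i
                  = vals (run adj f gamma sel u x0 ManMul k) i).
Proof.
have u_ge0 k i j : 0 <= u k i j by case/andP: (u_range k i j).
elim=> [|k [effcost_eq vals_eq]].
  by split=> // i j a b _; rewrite /= !addr0 mulr1.
split=> [i j a b adj_ij|i]; last exact: step_vals_congr.
rewrite !step_effcost // effcost_eq // !vals_eq.
by rewrite !(violated_congr vals_eq effcost_eq).
Qed.
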